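(* Consider the discrete system, depending on a time step $h$, $$\frac{\tilde{x}-x}{h} = a x+ \hat{a} \tilde{x} - \big(bxy+c \tilde{x}\tilde{y}+d x\tilde{y} + e \tilde{x}y\big), \qquad \frac{\tilde{y}-y}{h} = - A y -\hat{A}\tilde{y} + \big(Bxy+C \tilde{x}\tilde{y}+D x\tilde{y} + E \tilde{x}y\big),$$ where the constants $a,\hat a,b,c,d,e,A,\hat A,B,C,D,E$ are independent of $h$ and satisfy $$a+\hat{a} = A + \hat{A} = b+c+d+e = B+C+D+E = 1.$$ Such a system is specified by the list $\{a,b,c,d,e,A,B,C,D,E\}$ (with $\hat a=1-a$, $\hat A=1-A$). The system defines a birational map $\varphi:(x,y)\mapsto(\tilde x,\tilde y)$ (i.e. $\tilde x,\tilde y$ are given explicitly and uniquely as rational functions of $x,y$ (and $h$), and $x,y$ are given explicitly and uniquely as rational functions of $\tilde x,\tilde y$ (and $h$), for generic $h$) if and only if the parameters belong to one of the following cases: (i) $\{a,0,0,d,e,A,0,0,D,E\}$ with $d+e=1=D+E$; (ii) $\{a,0,0,1,0,A,B,0,D,E\}$ with $B+D+E=1$; (iii) $\{a,0,0,0,1,A,0,C,D,E\}$ with $C+D+E=1$; (iv) $\{a,b,0,d,e,A,0,0,0,1\}$ with $b+d+e=1$; (v) $\{a,0,c,d,e,A,0,0,1,0\}$ with $c+d+e=1$; (vi) $\{a,0,c,d,0,A,B,0,D,0\}$ with $c+d=1=B+D$; (vii) $\{a,b,0,0,e,A,0,C,0,E\}$ with $b+e=1=C+E$. In each case $a$ and $A$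 are arbitrary.
   Context: The system is a first-order discretization of the Lotka–Volterra system $\dot x = x(1-y)$, $\dot y = y(x-1)$, obtained by replacing $x\to ax+\hat a\tilde x$, $y\to Ay+\hat A\tilde y$, and $xy$ by a linear combination of $xy,\tilde x\tilde y,x\tilde y,\tilde x y$; here $\tilde x,\tilde y$ denote the values of the variables after one time step $h$. *)

From HB Require Import structures.
From mathcomp Require Import all_boot all_order all_algebra.
From mathcomp Require Import fraction.
Set Implicit Arguments. Unset Strict Implicit. Unset Printing Implicit Defensive.
Import Order.TTheory GRing.Theory Num.Theory.
Local Open Scope ring_scope.

(* Function field K = R(h, x, y) of rational functions in three
   indeterminates over the parameter field R, built as the fraction field of
   the iterated polynomial ring R[y][x][h]. *)
Definition Pol3 (R : realFieldType) := {poly {poly {poly R}}}.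
Definition K3 (R : realFieldType) := {fraction Pol3 R}.

Definition cst (R : realFieldType) (r : R) : K3 R :=
  tofrac (((r%:P)%:P)%:P : Pol3 R).
Definition hvar (R : realFieldType) : K3 R := tofrac ('X : Pol3 R).
Definition xvar (R : realFieldType) : K3 R := tofrac (('X)%:P : Pol3 R).
Definition yvar (R : realFieldType) : K3 R := tofrac ((('X)%:P)%:P : Pol3 R).

Definition LVsys (R : realFieldType) (a b c d e A B C D E : R)
  (h x y xt yt : K3 R) : Prop :=
  (xt - x) / h = cst a * x + cst (1 - a) * xt
     - (cst b * x * y + cst c * xt * yt + cst d * x * yt + cst e * xt * y)
  /\
  (yt - y) / h = - (cst A * y) - cst (1 - A) * yt
     + (cst B * x * y + cst C * xt * yt + cst D * x * yt + cst E * xt * y).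

(* Here the
   generic point (h,x,y) is given by the indeterminates of K3 R. *)
Definition birational_LV (R : realFieldType) (a b c d e A B C D E : R) : Prop :=
  (exists xt yt : K3 R,
     LVsys a b c d e A B C D E (hvar R) (xvar R) (yvar R) xt yt /\
     forall xt' yt' : K3 R,
       LVsys a b c d e A B C D E (hvar R) (xvar R) (yvar R) xt' yt' ->
       xt' = xt /\ yt' = yt)
  /\
  (exists x0 y0 : K3 R,
     LVsys a b c d e A B C D E (hvar R) x0 y0 (xvar R) (yvar R) /\
     forall x0' y0' : K3 R,
       LVsys a b c d e A B C D E (hvar R) x0' y0' (xvar R) (yvar R) ->
       x0' = x0 /\ y0' = y0).

From HB Require Import structures.
From mathcomp Require Import all_boot all_order all_algebra.
From mathcomp Require Import fraction.
From mathcomp Require Import ring lra.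
Import Order.TTheory GRing.Theory Num.Theory.
Local Open Scope ring_scope.

Set Implicit Arguments. Unset Strict Implicit. Unset Printing Implicit Defensive.

(* Multiplied by h, each equation of the step (x,y) -> (X,Y) is bilinear in
   the unknowns:  al*X*Y + P*X + Q*Y + R = 0,  the XY-coefficients being
   c*h and C*h.  A pair of bilinear equations over a field has a unique
   solution when both are linear (nonzero determinant) or when one of them
   involves a single unknown (triangular case); otherwise eliminating Y
   leaves a quadratic in X with two distinct roots that both lift to
   solutions.  For the forward map this gives the criterion
   (c = C = 0) or (C = E = 0) or (c = d = 0).  The backward map is the
   forward map of the data with h -> -h, a <-> 1-a, A <-> 1-A, b <-> c,
   d <-> e, B <-> C, D <-> E, hence (b = B = 0) or (B = D = 0) or
   (b = e = 0).  The determinants and the discriminant that must not vanish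
   are polynomials in (h,x,y) whose value at h = 0, where the step is the
   identity, is nonzero; this is read off by specializing h := 0 through a
   ring morphism.  Intersecting the two criteria under the normalizations
   b+c+d+e = B+C+D+E = 1 yields the seven cases. *)

Definition unique2 (T : Type) (S : T -> T -> Prop) : Prop :=
  exists X Y, S X Y /\ forall X' Y', S X' Y' -> X' = X /\ Y' = Y.

Lemma unique2_ext (T : Type) (S1 S2 : T -> T -> Prop) :
  (forall X Y, S1 X Y <-> S2 X Y) -> unique2 S1 <-> unique2 S2.
Proof.
move=> E; split=> -[X [Y [HS U]]]; exists X, Y.
  by split=> [|X' Y' /E]; [apply/E | exact: U].
by split=> [|X' Y' /E]; [apply/E | exact: U].
Qed.

Lemma unique2_swap (T : Type) (S : T -> T -> Prop) :
  unique2 S -> unique2 (fun Y X => S X Y).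
Proof. by case=> X [Y [HS U]]; exists Y, X; split=> // Y' X' /U [-> ->]. Qed.

Lemma solve_linear (K : fieldType) (u v X : K) : u != 0 -> u*X + v = 0 -> X = - v / u.
Proof. by move=> un /eqP; rewrite addrC addr_eq0 => /eqP ->; field. Qed.

Lemma divr_eq (K : fieldType) (h u v : K) : h != 0 -> (u / h = v) <-> (u - h * v = 0).
Proof.
move=> hn; split=> [<-|/eqP]; first by rewrite mulrC divfK // subrr.
by rewrite subr_eq0 => /eqP ->; field.
Qed.

Lemma oppr_eq0_iff (K : fieldType) (z : K) : - z = 0 <-> z = 0.
Proof. by split=> [/eqP|->]; rewrite ?oppr0 // oppr_eq0 => /eqP. Qed.

Lemma quadratic_second_root (K : fieldType) (k2 k1 k0 X : K) :
  k2 != 0 -> k1*k1 - 4%:R*k0*k2 != 0 -> k2*X*X + k1*X + k0 = 0 ->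
  exists2 X', X' != X & k2*X'*X' + k1*X' + k0 = 0.
Proof.
move=> k2n dn fX; exists (- k1 / k2 - X); last by rewrite -fX; field.
apply: contra dn => /eqP eXX.
have k1E : k1 + 2%:R*k2*X = - k2 * ((- k1 / k2 - X) - X) by field.
have -> : k1*k1 - 4%:R*k0*k2 =
          (k1 + 2%:R*k2*X)^+2 - 4%:R*k2*(k2*X*X + k1*X + k0) by ring.
by rewrite fX k1E eXX subrr !mulr0 expr0n /= subrr.
Qed.

Section BilinearSystems.
Variables (K : fieldType) (al1 P1 Q1 R1 al2 P2 Q2 R2 : K).

Definition bilin_sys (X Y : K) : Prop :=
  al1*X*Y + P1*X + Q1*Y + R1 = 0 /\ al2*X*Y + P2*X + Q2*Y + R2 = 0.

(* Both equations linear: Cramer's rule. *)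
Lemma bilin_unique_linear :
  al1 = 0 -> al2 = 0 -> P1*Q2 - P2*Q1 != 0 -> unique2 bilin_sys.
Proof.
move=> a10 a20; set Dl := P1*Q2 - P2*Q1 => Dn; rewrite /bilin_sys a10 a20.
exists ((Q1*R2 - Q2*R1)/Dl), ((P2*R1 - P1*R2)/Dl).
split=> [|X Y]; first by split; rewrite /Dl; field.
rewrite !mul0r !add0r => -[e1 e2].
have eX : X * Dl = Q1*R2 - Q2*R1.
  have -> : X * Dl = Q2*(P1*X + Q1*Y + R1) - Q1*(P2*X + Q2*Y + R2)
                     + (Q1*R2 - Q2*R1) by rewrite /Dl; ring.
  by rewrite e1 e2; ring.
have eY : Y * Dl = P2*R1 - P1*R2.
  have -> : Y * Dl = P1*(P2*X + Q2*Y + R2) - P2*(P1*X + Q1*Y + R1)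
                     + (P2*R1 - P1*R2) by rewrite /Dl; ring.
  by rewrite e1 e2; ring.
by rewrite -eX -eY !mulfK.
Qed.

(* The second equation fixes Y; the first is then linear in X. *)
Lemma bilin_unique_Yfirst :
  al2 = 0 -> P2 = 0 -> Q2 != 0 -> P1*Q2 - al1*R2 != 0 -> unique2 bilin_sys.
Proof.
move=> a20 p20 Qn Nn; rewrite /bilin_sys a20 p20.
set Y0 := - R2 / Q2.
have Dn : al1*Y0 + P1 != 0.
  have -> : al1*Y0 + P1 = (P1*Q2 - al1*R2) / Q2 by rewrite /Y0; field.
  by rewrite mulf_neq0 ?invr_eq0.
exists (- (Q1*Y0 + R1) / (al1*Y0 + P1)), Y0; split=> [|X Y [e1 e2]].
  by split; [field | rewrite !mul0r !add0r /Y0; field].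
have eY : Y = Y0 by apply: solve_linear Qn _; rewrite -e2; ring.
split=> //; apply: solve_linear Dn _; rewrite -e1 eY; ring.
Qed.

(* Coefficients of the quadratic in X obtained by eliminating Y. *)
Let k2 := P1*al2 - P2*al1.
Let k1 := P1*Q2 + R1*al2 - P2*Q1 - R2*al1.
Let k0 := R1*Q2 - R2*Q1.

Lemma bilin_eliminate X Y : bilin_sys X Y -> k2*X*X + k1*X + k0 = 0.
Proof.
case=> e1 e2.
have -> : k2*X*X + k1*X + k0 = (al2*X + Q2)*(al1*X*Y + P1*X + Q1*Y + R1)
                              - (al1*X + Q1)*(al2*X*Y + P2*X + Q2*Y + R2).
  by rewrite /k2 /k1 /k0; ring.
by rewrite e1 e2; ring.
Qed.

(* Conversely every root of the eliminant lifts to a solution, provided the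
   two equations never degenerate simultaneously in Y. *)
Lemma bilin_lift X : al1*Q2 - al2*Q1 != 0 -> k2*X*X + k1*X + k0 = 0 ->
  exists Y, bilin_sys X Y.
Proof.
move=> Wn fX; have [z1|nz1] := eqVneq (al1*X + Q1) 0.
  have nz2 : al2*X + Q2 != 0.
    apply: contra Wn => /eqP z2.
    have -> : al1*Q2 - al2*Q1 = al1*(al2*X + Q2) - al2*(al1*X + Q1) by ring.
    by rewrite z1 z2 !mulr0 subrr.
  exists (- (P2*X + R2) / (al2*X + Q2)); split; last by field.
  have -> : al1*X*(- (P2*X + R2) / (al2*X + Q2)) + P1*X
          + Q1*(- (P2*X + R2) / (al2*X + Q2)) + R1
          = (k2*X*X + k1*X + k0) / (al2*X + Q2) by rewrite /k2 /k1 /k0; field.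
  by rewrite fX mul0r.
exists (- (P1*X + R1) / (al1*X + Q1)); split; first by field.
have -> : al2*X*(- (P1*X + R1) / (al1*X + Q1)) + P2*X
        + Q2*(- (P1*X + R1) / (al1*X + Q1)) + R2
        = - (k2*X*X + k1*X + k0) / (al1*X + Q1) by rewrite /k2 /k1 /k0; field.
by rewrite fX oppr0 mul0r.
Qed.

Lemma bilin_not_unique : k2 != 0 -> al1*Q2 - al2*Q1 != 0 ->
  k1*k1 - 4%:R*k0*k2 != 0 -> ~ unique2 bilin_sys.
Proof.
move=> k2n Wn dn [X [Y [sXY U]]].
have [X' neX fX'] := quadratic_second_root k2n dn (bilin_eliminate sXY).
have [Y' sXY'] := bilin_lift Wn fX'.
by have [eX _] := U _ _ sXY'; rewrite eX eqxx in neX.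
Qed.

End BilinearSystems.

Lemma bilin_sys_swap (K : fieldType) (al1 P1 Q1 R1 al2 P2 Q2 R2 X Y : K) :
  bilin_sys al1 P1 Q1 R1 al2 P2 Q2 R2 X Y <-> bilin_sys al2 Q2 P2 R2 al1 Q1 P1 R1 Y X.
Proof.
have E (al P Q R : K) : al*Y*X + Q*Y + P*X + R = al*X*Y + P*X + Q*Y + R by ring.
by rewrite /bilin_sys !E; split=> -[].
Qed.

Lemma bilin_unique_Xfirst (K : fieldType) (al1 P1 Q1 R1 al2 P2 Q2 R2 : K) :
  al1 = 0 -> Q1 = 0 -> P1 != 0 -> Q2*P1 - al2*R1 != 0 ->
  unique2 (bilin_sys al1 P1 Q1 R1 al2 P2 Q2 R2).
Proof.
move=> a10 q10 Pn Nn.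
have := @bilin_unique_Yfirst _ al2 Q2 P2 R2 al1 Q1 P1 R1 a10 q10 Pn Nn.
move/unique2_swap; apply: iffLR; apply: unique2_ext => X Y.
by rewrite bilin_sys_swap.
Qed.

Record lvdata (T : Type) := LVData {
  pa : T; pb : T; pc : T; pd : T; pe : T;
  pA : T; pB : T; pC : T; pD : T; pE : T;
  ph : T; px : T; py : T }.

Definition map_lvdata (T U : Type) (f : T -> U) (p : lvdata T) : lvdata U :=
  LVData (f (pa p)) (f (pb p)) (f (pc p)) (f (pd p)) (f (pe p))
         (f (pA p)) (f (pB p)) (f (pC p)) (f (pD p)) (f (pE p))
         (f (ph p)) (f (px p)) (f (py p)).

Definition lv_step (K : fieldType) (p : lvdata K) (X Y : K) : Prop :=
  (X - px p) / ph p = pa p * px p + (1 - pa p) * X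
     - (pb p * px p * py p + pc p * X * Y + pd p * px p * Y + pe p * X * py p)
  /\
  (Y - py p) / ph p = - (pA p * py p) - (1 - pA p) * Y
     + (pB p * px p * py p + pC p * X * Y + pD p * px p * Y + pE p * X * py p).

Section Coefficients.
Variables (T : comNzRingType) (p : lvdata T).

(* Coefficients in (X,Y) of the bilinear forms  X - x - h*(rhs_1)  and
   -(Y - y - h*(rhs_2)), the step equations cleared of the denominator h. *)
Definition al1 : T := pc p * ph p.
Definition P1 : T := 1 - ph p * (1 - pa p) + ph p * pe p * py p.
Definition Q1 : T := ph p * pd p * px p.
Definition R1 : T := - px p - ph p * pa p * px p + ph p * pb p * px p * py p.
Definition al2 : T := pC p * ph p.
Definition P2 : T := ph p * pE p * py p.
Definition Q2 : T := - (1 + ph p * (1 - pA p) - ph p * pD p * px p).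
Definition R2 : T := py p - ph p * pA p * py p + ph p * pB p * px p * py p.

(* The quantities whose nonvanishing the uniqueness analysis needs. *)
Definition lin_det : T := P1 * Q2 - P2 * Q1.
Definition pivot_Y : T := P1 * Q2 - al1 * R2.
Definition pivot_X : T := Q2 * P1 - al2 * R1.
Definition elim_disc : T :=
  let k2 := P1 * al2 - P2 * al1 in
  let k1 := P1 * Q2 + R1 * al2 - P2 * Q1 - R2 * al1 in
  let k0 := R1 * Q2 - R2 * Q1 in
  k1 * k1 - 4%:R * k0 * k2.
Definition lead_quot : T := pC p * P1 - pc p * pE p * ph p * py p.
Definition cross_quot : T := pc p * Q2 - pC p * ph p * pd p * px p.

End Coefficients.

Ltac unfold_coefs := rewrite /lin_det /pivot_Y /pivot_X /elim_disc /lead_quot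
  /cross_quot /al1 /P1 /Q1 /R1 /al2 /P2 /Q2 /R2 /=.

Section CoefficientIdentities.
Variables (T : comNzRingType) (p : lvdata T).

(* The leading coefficient of the eliminant and the coefficient deciding
   whether a root lifts both carry a factor h. *)
Lemma lead_factor : P1 p * al2 p - P2 p * al1 p = ph p * lead_quot p.
Proof. by unfold_coefs; ring. Qed.

Lemma cross_factor : al1 p * Q2 p - al2 p * Q1 p = ph p * cross_quot p.
Proof. by unfold_coefs; ring. Qed.

(* At h = 0 the step is the identity map (X,Y) = (x,y); the nondegeneracy
   quantities then take the following values. *)
Section AtZeroStep.
Hypothesis h0 : ph p = 0.

Lemma lin_det_h0 : lin_det p = -1. Proof. by unfold_coefs; rewrite h0; ring. Qed.
Lemma pivot_Y_h0 : pivot_Y p = -1. Proof. by unfold_coefs; rewrite h0; ring. Qed.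
Lemma pivot_X_h0 : pivot_X p = -1. Proof. by unfold_coefs; rewrite h0; ring. Qed.
Lemma Q2_h0 : Q2 p = -1. Proof. by unfold_coefs; rewrite h0; ring. Qed.
Lemma P1_h0 : P1 p = 1. Proof. by unfold_coefs; rewrite h0; ring. Qed.
Lemma elim_disc_h0 : elim_disc p = 1. Proof. by unfold_coefs; rewrite h0; ring. Qed.
Lemma lead_quot_h0 : lead_quot p = pC p. Proof. by unfold_coefs; rewrite h0; ring. Qed.
Lemma cross_quot_h0 : cross_quot p = - pc p. Proof. by unfold_coefs; rewrite h0; ring. Qed.

End AtZeroStep.
End CoefficientIdentities.

(* All coefficients are polynomial in the data, so they commute with ring
   morphisms applied to the data. *)
Definition natural_coef (q : forall T : comNzRingType, lvdata T -> T) : Prop :=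
  forall (T U : comNzRingType) (f : {rmorphism T -> U}) (p : lvdata T),
    q U (map_lvdata f p) = f (q T p).

Ltac natural_by_unfolding := move=> T U f p; unfold_coefs;
  rewrite ?(rmorphB, rmorphD, rmorphM, rmorphN, rmorph1, rmorph_nat).

Lemma natural_lin_det : natural_coef (@lin_det). Proof. by natural_by_unfolding. Qed.
Lemma natural_pivot_Y : natural_coef (@pivot_Y). Proof. by natural_by_unfolding. Qed.
Lemma natural_pivot_X : natural_coef (@pivot_X). Proof. by natural_by_unfolding. Qed.
Lemma natural_Q2 : natural_coef (@Q2). Proof. by natural_by_unfolding. Qed.
Lemma natural_P1 : natural_coef (@P1). Proof. by natural_by_unfolding. Qed.
Lemma natural_elim_disc : natural_coef (@elim_disc). Proof. by natural_by_unfolding. Qed.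
Lemma natural_lead_quot : natural_coef (@lead_quot). Proof. by natural_by_unfolding. Qed.
Lemma natural_cross_quot : natural_coef (@cross_quot). Proof. by natural_by_unfolding. Qed.

Lemma lv_step_bilin (K : fieldType) (p : lvdata K) (X Y : K) : ph p != 0 ->
  lv_step p X Y <->
  bilin_sys (al1 p) (P1 p) (Q1 p) (R1 p) (al2 p) (P2 p) (Q2 p) (R2 p) X Y.
Proof.
move=> hn; rewrite /lv_step /bilin_sys !divr_eq //.
set e1 := (X - _ - _ * _); set e2 := (Y - _ - _ * _).
have -> : al1 p * X * Y + P1 p * X + Q1 p * Y + R1 p = e1 by rewrite /e1; unfold_coefs; ring.
have -> : al2 p * X * Y + P2 p * X + Q2 p * Y + R2 p = - e2 by rewrite /e2; unfold_coefs; ring.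
by rewrite oppr_eq0_iff.
Qed.

Section StepCriterion.
Variables (K : fieldType) (p : lvdata K).
Hypotheses (hn : ph p != 0) (xn : px p != 0) (yn : py p != 0).

Let lv_step_bilin_unique :
  unique2 (lv_step p) <->
  unique2 (bilin_sys (al1 p) (P1 p) (Q1 p) (R1 p) (al2 p) (P2 p) (Q2 p) (R2 p)).
Proof. by apply: unique2_ext => X Y; apply: lv_step_bilin. Qed.

Lemma lv_unique_sufficient :
  lin_det p != 0 -> Q2 p != 0 -> P1 p != 0 -> pivot_Y p != 0 -> pivot_X p != 0 ->
  (pc p = 0 /\ pC p = 0) \/ (pC p = 0 /\ pE p = 0) \/ (pc p = 0 /\ pd p = 0) ->
  unique2 (lv_step p).
Proof.
move=> Dn Q2n P1n NYn NXn; rewrite lv_step_bilin_unique.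
case=> [[c0 C0]|[[C0 E0]|[c0 d0]]].
- by apply: bilin_unique_linear; rewrite /al1 /al2 ?c0 ?C0 ?mul0r.
- by apply: bilin_unique_Yfirst; rewrite /al2 /P2 ?E0 ?C0 ?mulr0 ?mul0r.
- by apply: bilin_unique_Xfirst; rewrite /al1 /Q1 ?c0 ?d0 ?mulr0 ?mul0r.
Qed.

Lemma lv_not_unique :
  lead_quot p != 0 -> cross_quot p != 0 -> elim_disc p != 0 -> ~ unique2 (lv_step p).
Proof.
move=> Ln Wn dn; rewrite lv_step_bilin_unique.
by apply: bilin_not_unique => //; rewrite ?lead_factor ?cross_factor mulf_neq0.
Qed.

(* Outside the three shapes, one of c*h, C*h is a genuine XY-term and the
   quantities of [lv_not_unique] are nonzero. *)
Lemma lv_unique_necessary :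
  elim_disc p != 0 -> (pC p != 0 -> lead_quot p != 0) ->
  (pc p != 0 -> cross_quot p != 0) -> unique2 (lv_step p) ->
  (pc p = 0 /\ pC p = 0) \/ (pC p = 0 /\ pE p = 0) \/ (pc p = 0 /\ pd p = 0).
Proof.
move=> dn Lh Wh U.
have [c0|cn] := eqVneq (pc p) 0; have [C0|Cn] := eqVneq (pC p) 0.
- by left.
- have [d0|dn0] := eqVneq (pd p) 0; first by right; right.
  have Wn : cross_quot p != 0.
    by rewrite /cross_quot c0 mul0r sub0r oppr_eq0 !mulf_neq0.
  by case: (lv_not_unique (Lh Cn) Wn dn U).
- have [E0|En] := eqVneq (pE p) 0; first by right; left.
  have Ln : lead_quot p != 0.
    by rewrite /lead_quot C0 mul0r sub0r oppr_eq0 !mulf_neq0.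
  by case: (lv_not_unique Ln (Wh cn) dn U).
- by case: (lv_not_unique (Lh Cn) (Wh cn) dn U).
Qed.

End StepCriterion.

Definition pconst (R : realFieldType) (r : R) : Pol3 R := ((r%:P)%:P)%:P.

Definition lv_poly (R : realFieldType) (a b c d e A B C D E : R) (h : Pol3 R) :
  lvdata (Pol3 R) :=
  LVData (pconst a) (pconst b) (pconst c) (pconst d) (pconst e)
         (pconst A) (pconst B) (pconst C) (pconst D) (pconst E)
         h ('X%:P) ('X%:P%:P).

Lemma tofrac_pconst_eq0 (R : realFieldType) (r : R) : tofrac (pconst r) = 0 <-> r = 0.
Proof.
split=> [/eqP|->]; last by rewrite /pconst !polyC0 tofrac0.
by rewrite tofrac_eq0 /pconst !polyC_eq0 => /eqP.
Qed.

Lemma pconst_h0_neq0 (R : realFieldType) (r : R) :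
  tofrac (pconst r) != 0 -> horner_eval 0 (pconst r) != 0.
Proof. by rewrite tofrac_eq0 horner_evalE hornerC /pconst !polyC_eq0. Qed.

Lemma natural_nonzero_h0 (R : realFieldType) (q : forall T : comNzRingType, lvdata T -> T)
  (P : lvdata (Pol3 R)) : natural_coef q ->
  q _ (map_lvdata (horner_eval 0) P) != 0 -> q _ (map_lvdata (@tofrac _) P) != 0.
Proof.
move=> nq; rewrite nq nq tofrac_eq0; apply: contra => /eqP ->.
by rewrite rmorph0.
Qed.

Lemma lv_poly_criterion (R : realFieldType) (a b c d e A B C D E : R) (h : Pol3 R) :
  h.[0] = 0 -> h != 0 ->
  unique2 (lv_step (map_lvdata (@tofrac _) (lv_poly a b c d e A B C D E h))) <->
  (c = 0 /\ C = 0) \/ (C = 0 /\ E = 0) \/ (c = 0 /\ d = 0).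
Proof.
move=> h0 hn; set P := lv_poly _ _ _ _ _ _ _ _ _ _ h.
set Pt := map_lvdata (@tofrac _) P; set P0 := map_lvdata (horner_eval 0) P.
have P0h : ph P0 = 0 by rewrite /= horner_evalE.
suff -> : unique2 (lv_step Pt) <->
  (pc Pt = 0 /\ pC Pt = 0) \/ (pC Pt = 0 /\ pE Pt = 0) \/ (pc Pt = 0 /\ pd Pt = 0).
  by rewrite /= !tofrac_pconst_eq0.
have nzN1 : -1 != 0 :> {poly {poly R}} by rewrite oppr_eq0 oner_neq0.
have hnt : ph Pt != 0 by rewrite /= tofrac_eq0.
have xnt : px Pt != 0 by rewrite /= tofrac_eq0 polyC_eq0 polyX_eq0.
have ynt : py Pt != 0 by rewrite /= tofrac_eq0 !polyC_eq0 polyX_eq0.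
split.
  apply: (lv_unique_necessary hnt xnt ynt).
  - apply: (natural_nonzero_h0 natural_elim_disc).
    by rewrite (elim_disc_h0 P0h) oner_neq0.
  - move=> Cn; apply: (natural_nonzero_h0 natural_lead_quot).
    by rewrite (lead_quot_h0 P0h); apply: pconst_h0_neq0.
  - move=> cn; apply: (natural_nonzero_h0 natural_cross_quot).
    by rewrite (cross_quot_h0 P0h) oppr_eq0; apply: pconst_h0_neq0.
apply: (lv_unique_sufficient hnt).
- apply: (natural_nonzero_h0 natural_lin_det).
  by rewrite (lin_det_h0 P0h).
- apply: (natural_nonzero_h0 natural_Q2).
  by rewrite (Q2_h0 P0h).
- apply: (natural_nonzero_h0 natural_P1).
  by rewrite (P1_h0 P0h) oner_neq0.
- apply: (natural_nonzero_h0 natural_pivot_Y).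
  by rewrite (pivot_Y_h0 P0h).
- apply: (natural_nonzero_h0 natural_pivot_X).
  by rewrite (pivot_X_h0 P0h).
Qed.

Lemma cst1B (R : realFieldType) (r : R) : cst (1 - r) = 1 - cst r.
Proof. by rewrite /cst !polyCB !polyC1 tofracB; congr (_ - _); exact: tofrac1. Qed.

Lemma LVsys_step (R : realFieldType) (a b c d e A B C D E : R) (h x y X Y : K3 R) :
  LVsys a b c d e A B C D E h x y X Y <->
  lv_step (LVData (cst a) (cst b) (cst c) (cst d) (cst e)
                  (cst A) (cst B) (cst C) (cst D) (cst E) h x y) X Y.
Proof. by rewrite /LVsys /lv_step /= !cst1B; exact: iff_refl. Qed.

Lemma lv_step_reverse (K : fieldType) (a b c d e A B C D E h x y X Y : K) :
  h != 0 ->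
  lv_step (LVData a b c d e A B C D E h x y) X Y <->
  lv_step (LVData (1 - a) c b e d (1 - A) C B E D (- h) X Y) x y.
Proof.
move=> hn; rewrite /lv_step /= !divr_eq ?oppr_eq0 //.
have E1 : X - x - h * (a*x + (1 - a)*X - (b*x*y + c*X*Y + d*x*Y + e*X*y)) =
  - (x - X - - h * ((1 - a)*X + (1 - (1 - a))*x - (c*X*Y + b*x*y + e*X*y + d*x*Y))).
  by ring.
have E2 : Y - y - h * (- (A*y) - (1 - A)*Y + (B*x*y + C*X*Y + D*x*Y + E*X*y)) =
  - (y - Y - - h * (- ((1 - A)*Y) - (1 - (1 - A))*y + (C*X*Y + B*x*y + E*X*y + D*x*Y))).
  by ring.
rewrite E1 E2 !oppr_eq0_iff; exact: iff_refl.
Qed.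

Lemma hvar_neq0 (R : realFieldType) : hvar R != 0.
Proof. by rewrite /hvar tofrac_eq0 polyX_eq0. Qed.

Lemma reversed_data (R : realFieldType) (a b c d e A B C D E : R) :
  map_lvdata (@tofrac _) (lv_poly (1 - a) c b e d (1 - A) C B E D (- 'X)) =
  LVData (1 - cst a) (cst c) (cst b) (cst e) (cst d)
         (1 - cst A) (cst C) (cst B) (cst E) (cst D) (- hvar R) (xvar R) (yvar R).
Proof. by congr LVData; [exact: cst1B | exact: cst1B | exact: tofracN]. Qed.

Lemma birational_LV_iff (R : realFieldType) (a b c d e A B C D E : R) :
  birational_LV a b c d e A B C D E <->
  ((c = 0 /\ C = 0) \/ (C = 0 /\ E = 0) \/ (c = 0 /\ d = 0)) /\
  ((b = 0 /\ B = 0) \/ (B = 0 /\ D = 0) \/ (b = 0 /\ e = 0)).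
Proof.
have fwd : unique2 (LVsys a b c d e A B C D E (hvar R) (xvar R) (yvar R)) <->
    unique2 (lv_step (map_lvdata (@tofrac _) (lv_poly a b c d e A B C D E 'X))).
  by apply: unique2_ext => X Y; apply: LVsys_step.
have bwd : unique2 (fun X Y => LVsys a b c d e A B C D E (hvar R) X Y (xvar R) (yvar R)) <->
    unique2 (lv_step (map_lvdata (@tofrac _)
                        (lv_poly (1 - a) c b e d (1 - A) C B E D (- 'X)))).
  apply: unique2_ext => X Y; rewrite reversed_data LVsys_step.
  rewrite lv_step_reverse ?hvar_neq0 //; exact: iff_refl.
have hX0 : ('X : Pol3 R).[0] = 0 by rewrite hornerX.
have hNX0 : (- 'X : Pol3 R).[0] = 0 by rewrite hornerN hornerX oppr0.
have hNX : (- 'X : Pol3 R) != 0 by rewrite oppr_eq0 polyX_eq0.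
rewrite -(lv_poly_criterion a b c d e A B C D E hX0 (negbT (polyX_eq0 _))).
rewrite -(lv_poly_criterion (1 - a) c b e d (1 - A) C B E D hNX0 hNX) -fwd -bwd.
exact: iff_refl.
Qed.

(* Combining the forward and backward criteria under the normalizations
   b+c+d+e = B+C+D+E = 1: of the nine combinations two contradict these
   normalizations, and the remaining seven are the cases (i)-(vii). *)
Lemma combined_criteria (R : realFieldType) (b c d e B C D E : R) :
  b + c + d + e = 1 -> B + C + D + E = 1 ->
  ((c = 0 /\ C = 0) \/ (C = 0 /\ E = 0) \/ (c = 0 /\ d = 0)) /\
  ((b = 0 /\ B = 0) \/ (B = 0 /\ D = 0) \/ (b = 0 /\ e = 0)) <->
     (b = 0 /\ c = 0 /\ B = 0 /\ C = 0 /\ d + e = 1 /\ D + E = 1)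
  \/ (b = 0 /\ c = 0 /\ d = 1 /\ e = 0 /\ C = 0 /\ B + D + E = 1)
  \/ (b = 0 /\ c = 0 /\ d = 0 /\ e = 1 /\ B = 0 /\ C + D + E = 1)
  \/ (c = 0 /\ B = 0 /\ C = 0 /\ D = 0 /\ E = 1 /\ b + d + e = 1)
  \/ (b = 0 /\ B = 0 /\ C = 0 /\ D = 1 /\ E = 0 /\ c + d + e = 1)
  \/ (b = 0 /\ e = 0 /\ C = 0 /\ E = 0 /\ c + d = 1 /\ B + D = 1)
  \/ (c = 0 /\ d = 0 /\ B = 0 /\ D = 0 /\ b + e = 1 /\ C + E = 1).
Proof.
move=> hsum1 hsum2; split.
- case=> [[[c0 C0]|[[C0 E0]|[c0 d0]]] [[b0 B0]|[[B0 D0]|[b0 e0]]]].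
  + by left; do !split => //; lra.
  + by do 3 right; left; do !split => //; lra.
  + by right; left; do !split => //; lra.
  + by do 4 right; left; do !split => //; lra.
  + exfalso; lra.
  + by do 5 right; left; do !split => //; lra.
  + by do 2 right; left; do !split => //; lra.
  + by do 6 right; do !split => //; lra.
  + exfalso; lra.
- case=> [[b0 [c0 [B0 [C0 _]]]]|[[b0 [c0 [d1 [e0 [C0 _]]]]]|[[b0 [c0 [d0 [e1 [B0 _]]]]]|
         [[c0 [B0 [C0 [D0 _]]]]|[[b0 [B0 [C0 [D1 [E0 _]]]]]|[[b0 [e0 [C0 [E0 _]]]]|
         [c0 [d0 [B0 [D0 _]]]]]]]]]].
  + by split; left.
  + by split; [left | right; right].
  + by split; [right; right | left].
  + by split; [left | right; left].
  + by split; [right; left | left].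
  + by split; [right; left | right; right].
  + by split; [right; right | right; left].
Qed.

Unset Implicit Arguments.

Theorem theorem1 (R : realFieldType) (a b c d e A B C D E : R)
  (hsum1 : b + c + d + e = 1) (hsum2 : B + C + D + E = 1) :
  birational_LV a b c d e A B C D E <->
     (* (i) *)   (b = 0 /\ c = 0 /\ B = 0 /\ C = 0 /\ d + e = 1 /\ D + E = 1)
  \/ (* (ii) *)  (b = 0 /\ c = 0 /\ d = 1 /\ e = 0 /\ C = 0 /\ B + D + E = 1)
  \/ (* (iii) *) (b = 0 /\ c = 0 /\ d = 0 /\ e = 1 /\ B = 0 /\ C + D + E = 1)
  \/ (* (iv) *)  (c = 0 /\ B = 0 /\ C = 0 /\ D = 0 /\ E = 1 /\ b + d + e = 1)
  \/ (* (v) *)   (b = 0 /\ B = 0 /\ C = 0 /\ D = 1 /\ E = 0 /\ c + d + e = 1)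
  \/ (* (vi) *)  (b = 0 /\ e = 0 /\ C = 0 /\ E = 0 /\ c + d = 1 /\ B + D = 1)
  \/ (* (vii) *) (c = 0 /\ d = 0 /\ B = 0 /\ D = 0 /\ b + e = 1 /\ C + E = 1).
Proof.
rewrite birational_LV_iff; exact: combined_criteria.
Qed.
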